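(* Let $M$ be an $n\times n$ Hermitian positive semidefinite matrix which is irreducible. If the argument of each non-zero off-diagonal entry of $-M$ lies in $\left(-\frac{\pi}{2^n},\frac{\pi}{2^n}\right)$, then $\operatorname{rank}(M)\ge n-1$.
   Context: A square matrix is irreducible if it cannot be brought into block-diagonal form (with at least two diagonal blocks) by a simultaneous permutation of its rows and columns. *)

From mathcomp Require Import all_boot all_fingroup all_algebra.
From mathcomp Require Import reals trigo.
From mathcomp.real_closed Require Import complex.
Set Implicit Arguments. Unset Strict Implicit. Unset Printing Implicit Defensive.
Import GRing.Theory Num.Theory.
Local Open Scope ring_scope.

Definition conjtr (R : realType) (n : nat) (M : 'M[R[i]]_n) : 'M[R[i]]_n :=
  \matrix_(i, j) (M j i)^*.

Definition hermitian_mx (R : realType) (n : nat) (M : 'M[R[i]]_n) : Prop :=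
  conjtr M = M.

(* Positive semidefinite: v^* M v >= 0 (i.e. real and nonnegative)
   for every column vector v. *)
Definition psd_mx (R : realType) (n : nat) (M : 'M[R[i]]_n) : Prop :=
  forall v : 'cV[R[i]]_n,
    0 <= ((\row_j (v j 0)^*) *m M *m v) 0 0.

(* M can be brought by a simultaneous permutation s of rows and columns
   (i.e. to P M P^T, whose (i,j) entry is M (s i) (s j)) into block-diagonal
   form with (at least) two diagonal blocks, the first of size k, 0 < k < n.
   (Any block-diagonal form with >= 2 blocks groups into one with 2 blocks.) *)
Definition reducible_mx (R : realType) (n : nat) (M : 'M[R[i]]_n) : Prop :=
  exists (s : 'S_n) (k : nat), (0 < k)%N /\ (k < n)%N /\
    forall i j : 'I_n, (i < k)%N -> ~~ (j < k)%N ->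
      M (s i) (s j) = 0 /\ M (s j) (s i) = 0.

Definition irreducible_mx (R : realType) (n : nat) (M : 'M[R[i]]_n) : Prop :=
  ~ reducible_mx M.

(* The (principal) argument of z lies in the open interval (a, b):
   z = |z| (cos phi + i sin phi) with phi in (-pi, pi] and a < phi < b. *)
Definition arg_in (R : realType) (z : R[i]) (a b : R) : Prop :=
  exists phi : R, [/\ - pi < phi, phi <= pi,
    z = `|z| * Complex (cos phi) (sin phi) & a < phi < b].

From mathcomp Require Import all_boot all_fingroup all_algebra.
From mathcomp Require Import reals trigo.
From mathcomp.real_closed Require Import complex.
From mathcomp Require Import all_order ring lra.
Set Implicit Arguments. Unset Strict Implicit.
Import Order.TTheory GRing.Theory Num.Theory.
Local Open Scope ring_scope.

(* Write t_k = pi / 2^k and think of "sector t" as the open cone |arg z| < t.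
   Sectors are closed under addition and positive scaling, and for t <= pi/4
   the product of two elements of sector t lies in sector 2t.  Eliminating a
   row and column k with M_kk > 0 by the Schur complement
   S = M' - M'_k M_k' / M_kk therefore keeps M Hermitian positive semidefinite
   and turns the hypothesis "-M_ij in sector t_(m+1)" on size m+1 into
   "-S_ij in sector t_m" on size m, since -S_ij = -M_ij + (-M_ik)(-M_kj)/M_kk.
   The same decomposition shows that S_ij = 0 forces both summands to vanish,
   so S stays irreducible.  A kernel vector u of M with u_k != 0 restricts to a
   nonzero kernel vector of S, and induction on the size shows that a nonzero
   kernel vector of M has no zero coordinate.  Two such vectors are then
   proportional, so the kernel of M has dimension at most 1. *)

Section Sector.
Variable R : realType.
Implicit Types (s c x y : R) (z w : R[i]).

(* For s = sin t, c = cos t with 0 < t <= pi/2, [sector s c z] says z != 0 and |arg z| < t. *)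
Definition sector s c z : Prop := c * `|complex.Im z| < s * complex.Re z.

Definition sector0 s c z : Prop := z = 0 \/ sector s c z.

Lemma sector_Re_gt0 s c z : 0 < s -> 0 <= c -> sector s c z -> 0 < complex.Re z.
Proof.
case: z => x y; rewrite /sector /= => s0 c0 h.
have : 0 <= c * `|y| by rewrite mulr_ge0.
by rewrite -(pmulr_rgt0 _ s0); lra.
Qed.

Lemma sector_quadrant s c x y : 0 < s -> s <= c -> c * `|y| < s * x ->
  [/\ 0 < s * x - c * y, 0 < s * x + c * y, 0 < c * x - s * y & 0 < c * x + s * y].
Proof.
move=> s0 sc h; have c0 : 0 < c := lt_le_trans s0 sc.
have y_le := ler_norm y; have y_ge : - y <= `|y| by rewrite -normrN ler_norm.
have x0 : 0 < x.
  have : 0 <= c * `|y| by rewrite mulr_ge0 // ltW.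
  by rewrite -(pmulr_rgt0 _ s0); lra.
have cx : s * x <= c * x by rewrite ler_wpM2r // ltW.
have sy : s * `|y| <= c * `|y| by rewrite ler_wpM2r.
have : c * y <= c * `|y| by rewrite ler_pM2l.
have : - (c * y) <= c * `|y| by rewrite -mulrN ler_pM2l.
have : s * y <= s * `|y| by rewrite ler_pM2l.
have : - (s * y) <= s * `|y| by rewrite -mulrN ler_pM2l.
by split; lra.
Qed.

Lemma sectorD s c z w : 0 <= c -> sector s c z -> sector s c w -> sector s c (z + w).
Proof.
case: z => a b; case: w => a' b'; rewrite /sector /= => c0 hz hw.
apply: (le_lt_trans (y := c * `|b| + c * `|b'|)); last by rewrite mulrDr ltrD.
by rewrite -mulrDr ler_wpM2l // ler_normD.
Qed.

Lemma sectorMr s c z r : 0 < r -> sector s c z -> sector s c (z * r).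
Proof.
case: z => a b; case: r => r r'; rewrite ltcE /sector /= => /andP[/eqP/= -> r0].
by rewrite !mulr0 add0r subr0 normrM (gtr0_norm r0) !mulrA ltr_pM2r.
Qed.

(* The
   rotations z e^(it), w e^(it) lie in the open first quadrant and z e^(-it),
   w e^(-it) in the fourth (sector_quadrant); the two identities below express
   Im (z w e^(-2it)) < 0 < Im (z w e^(2it)) through this. *)
Lemma sectorM s c z w : 0 < s -> s <= c -> sector s c z -> sector s c w ->
  sector (s * c *+ 2) (c ^+ 2 - s ^+ 2) (z * w).
Proof.
case: z => a b; case: w => a' b'; rewrite /sector /= => s0 sc hz hw.
have [p1 p2 p3 p4] := sector_quadrant s0 sc hz.
have [q1 q2 q3 q4] := sector_quadrant s0 sc hw.
have Im_cw : 0 < s * c *+ 2 * (a * a' - b * b') - (c ^+ 2 - s ^+ 2) * (a * b' + b * a').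
  have -> : s * c *+ 2 * (a * a' - b * b') - (c ^+ 2 - s ^+ 2) * (a * b' + b * a')
    = (c * a + s * b) * (s * a' - c * b') + (s * a - c * b) * (c * a' + s * b') by ring.
  by rewrite addr_gt0 // mulr_gt0.
have Im_ccw : 0 < s * c *+ 2 * (a * a' - b * b') + (c ^+ 2 - s ^+ 2) * (a * b' + b * a').
  have -> : s * c *+ 2 * (a * a' - b * b') + (c ^+ 2 - s ^+ 2) * (a * b' + b * a')
    = (c * a - s * b) * (s * a' + c * b') + (s * a + c * b) * (c * a' - s * b') by ring.
  by rewrite addr_gt0 // mulr_gt0.
by case: (lerP 0 (a * b' + b * a')) => h;
  [rewrite ger0_norm | rewrite ltr0_norm]; lra.
Qed.

Lemma sector_double s c z : 0 < s -> s <= c -> sector s c z ->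
  sector (s * c *+ 2) (c ^+ 2 - s ^+ 2) z.
Proof.
move=> s0 sc hz; rewrite -[z]mulr1; apply: sectorM => //.
by rewrite /sector /= normr0 mulr0 mulr1.
Qed.

Lemma sector0D s c z w : 0 <= c -> sector0 s c z -> sector0 s c w -> sector0 s c (z + w).
Proof.
move=> c0 [->|hz] [->|hw]; rewrite ?add0r ?addr0; [left | right..] => //.
exact: sectorD.
Qed.

Lemma sector0Mr s c z r : 0 < r -> sector0 s c z -> sector0 s c (z * r).
Proof. by move=> r0 [->|hz]; [left; rewrite mul0r | right; apply: sectorMr]. Qed.

Lemma sector0M s c z w : 0 < s -> s <= c -> sector0 s c z -> sector0 s c w ->
  sector0 (s * c *+ 2) (c ^+ 2 - s ^+ 2) (z * w).
Proof.
move=> s0 sc [->|hz]; first by left; rewrite mul0r.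
by case=> [->|hw]; [left; rewrite mulr0 | right; apply: sectorM].
Qed.

Lemma sector0_double s c z : 0 < s -> s <= c -> sector0 s c z ->
  sector0 (s * c *+ 2) (c ^+ 2 - s ^+ 2) z.
Proof. by move=> s0 sc [->|hz]; [left | right; apply: sector_double]. Qed.

Lemma sector0_addr_eq0 s c z w : 0 < s -> 0 <= c -> sector0 s c z -> sector0 s c w ->
  z + w = 0 -> z = 0 /\ w = 0.
Proof.
move=> s0 c0 [->|hz] hw e; first by split=> //; rewrite -e add0r.
have Re_z := sector_Re_gt0 s0 c0 hz.
have Re_w : 0 <= complex.Re w.
  by case: hw => [->|hw] //; exact/ltW/(sector_Re_gt0 s0 c0).
have : complex.Re (z + w) = 0 by rewrite e.
by case: (z) (w) Re_z Re_w => a b [a' b'] /= *; exfalso; lra.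
Qed.

End Sector.

Section DyadicAngle.
Variable R : realType.

Local Notation theta k := (pi / 2 ^+ k : R).

Lemma theta_gt0 k : 0 < theta k.
Proof. by rewrite divr_gt0 ?pi_gt0 ?exprn_gt0. Qed.

Lemma theta_le_pihalf k : theta k.+1 <= pi / 2.
Proof.
rewrite ler_pM2l ?pi_gt0 // lef_pV2 ?posrE ?exprn_gt0 //.
by rewrite -[X in X <= _]expr1 ler_eXn2l // ltr1n.
Qed.

Lemma theta_double k : theta k.+1 *+ 2 = theta k.
Proof.
have h : (2 ^+ k : R) != 0 by rewrite expf_neq0 // pnatr_eq0.
by rewrite exprS mulr2n; field.
Qed.

Lemma sin_theta_double k :
  sin (theta k) = sin (theta k.+1) * cos (theta k.+1) *+ 2.
Proof. by rewrite -theta_double sin_mulr2n mulrC. Qed.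

Lemma cos_theta_double k :
  cos (theta k) = cos (theta k.+1) ^+ 2 - sin (theta k.+1) ^+ 2.
Proof. by rewrite -theta_double cos_mulr2n sin2cos2; ring. Qed.

Lemma sin_theta_gt0 k : 0 < sin (theta k.+1).
Proof.
apply: sin_gt0_pi; rewrite theta_gt0 (le_lt_trans (theta_le_pihalf k)) //.
by rewrite gtr_pMr ?pi_gt0 // invf_lt1 // ltr1n.
Qed.

Lemma cos_theta_ge0 k : 0 <= cos (theta k.+1).
Proof.
apply: cos_ge0_pihalf; rewrite theta_le_pihalf andbT.
by rewrite (le_trans _ (ltW (theta_gt0 _))) // lerNl oppr0 ltW // divr_gt0 ?pi_gt0.
Qed.

Lemma sin_theta_le_cos k : sin (theta k.+2) <= cos (theta k.+2).
Proof.
have := cos_theta_ge0 k; rewrite cos_theta_double.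
have := sin_theta_gt0 k.+1; have := cos_theta_ge0 k.+1.
set s := sin _; set c := cos _ => c0 s0 h.
rewrite leNgt; apply/negP => cs.
have : c ^+ 2 < s ^+ 2 by rewrite ltr_pXn2r // ?nnegrE ltW.
lra.
Qed.

End DyadicAngle.

Lemma sector_of_arg (R : realType) (t : R) (z : R[i]) : 0 < t <= pi / 2 ->
  arg_in z (- t) t -> z != 0 -> sector (sin t) (cos t) z.
Proof.
move=> /andP[t0 t1] [phi [p1 p2 ez /andP[a1 a2]]] z0.
have [r [er r0]] : exists r : R, `|z| = Complex r 0 /\ 0 < r.
  have : 0 < `|z| by rewrite normr_gt0.
  case: (`|z|) => r r'; rewrite ltcE /= => /andP[/eqP <- h].
  by exists r.
rewrite er in ez; rewrite ez /sector /= !mul0r subr0 addr0.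
have pi0 := pi_gt0 R.
have A : cos t * sin phi < sin t * cos phi.
  have : 0 < sin (t - phi) by apply: sin_gt0_pi; lra.
  by rewrite sinB; lra.
have B : - (cos t * sin phi) < sin t * cos phi.
  have : 0 < sin (t + phi) by apply: sin_gt0_pi; lra.
  by rewrite sinD; lra.
rewrite normrM (gtr0_norm r0) mulrCA (mulrCA (sin t)) ltr_pM2l //.
by case: (lerP 0 (sin phi)) => s; [rewrite ger0_norm | rewrite ltr0_norm // mulrN].
Qed.

Section QuadraticForm.
Variable R : realType.
Local Notation C := R[i].

Definition qform n (M : 'M[C]_n) (v : 'cV[C]_n) : C :=
  ((\row_j (v j 0)^*) *m M *m v) 0 0.

Lemma qformE n (M : 'M[C]_n) v : qform M v = \sum_a \sum_b (v a 0)^* * M a b * v b 0.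
Proof.
rewrite /qform mxE.
under eq_bigr => b _ do rewrite mxE big_distrl /=.
rewrite exchange_big /=; apply: eq_bigr => a _; apply: eq_bigr => b _.
by rewrite mxE.
Qed.

Lemma qform_delta n (M : 'M[C]_n) a : qform M (\col_b (b == a)%:R) = M a a.
Proof.
rewrite qformE (bigD1 a) //= [X in _ + X]big1 ?addr0; last first.
  by move=> b ba; apply: big1 => c _; rewrite mxE (negbTE ba) rmorph0 !mul0r.
rewrite (bigD1 a) //= [X in _ + X]big1 ?addr0; last first.
  by move=> b ba; rewrite !mxE (negbTE ba) mulr0.
by rewrite !mxE eqxx rmorph1 mul1r mulr1.
Qed.

Lemma psd_diag_ge0 n (M : 'M[C]_n) a : psd_mx M -> 0 <= M a a.
Proof. by move=> /(_ (\col_b (b == a)%:R)); rewrite -/(qform _ _) qform_delta. Qed.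

Lemma hermitian_conjE n (M : 'M[C]_n) : hermitian_mx M -> forall i j, (M i j)^* = M j i.
Proof. by move=> hM i j; rewrite -{2}hM mxE. Qed.

Definition col_ins m (k : 'I_m.+1) (t : C) (v : 'cV[C]_m) : 'cV[C]_m.+1 :=
  \col_a (if unlift k a is Some j then v j 0 else t).

Lemma col_ins_at m k t (v : 'cV[C]_m) : col_ins k t v k 0 = t.
Proof. by rewrite mxE unlift_none. Qed.

Lemma col_ins_lift m k t (v : 'cV[C]_m) j : col_ins k t v (lift k j) 0 = v j 0.
Proof. by rewrite mxE liftK. Qed.

Lemma qform_col_ins m (M : 'M[C]_m.+1) k t v : qform M (col_ins k t v) =
  t^* * M k k * t + t^* * (\sum_j M k (lift k j) * v j 0)
  + (\sum_i (v i 0)^* * M (lift k i) k) * t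
  + qform (\matrix_(i, j) M (lift k i) (lift k j)) v.
Proof.
rewrite !qformE (bigD1_ord k) //= (bigD1_ord k) //= !col_ins_at.
under [X in _ + X = _]eq_bigr => i _ do rewrite (bigD1_ord k) //=.
rewrite big_split /= mulr_sumr mulr_suml !col_ins_at -!addrA.
congr (_ + (_ + (_ + _))); apply: eq_bigr => i _; rewrite ?col_ins_lift ?mulrA //.
by apply: eq_bigr => j _; rewrite col_ins_lift mxE.
Qed.

End QuadraticForm.

Section SchurComplement.
Variable R : realType.
Local Notation C := R[i].

Definition schur_compl m (M : 'M[C]_m.+1) (k : 'I_m.+1) : 'M[C]_m :=
  \matrix_(i, j) (M (lift k i) (lift k j) - M (lift k i) k * M k (lift k j) / M k k).

Variables (m : nat) (M : 'M[C]_m.+1) (k : 'I_m.+1).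
Hypotheses (hM : hermitian_mx M) (Mkk_gt0 : 0 < M k k).

Let Mkk_neq0 : M k k != 0. Proof. by rewrite gt_eqF. Qed.
Let Mkk_conj : (M k k)^* = M k k. Proof. by rewrite geC0_conj // ltW. Qed.

Lemma schur_compl_hermitian : hermitian_mx (schur_compl M k).
Proof.
apply/matrixP => i j; rewrite !mxE rmorphB !rmorphM fmorphV /= Mkk_conj.
by rewrite !(hermitian_conjE hM) [M k _ * _]mulrC.
Qed.

(* Minimising the form of [M] over the [k]-th coordinate leaves the form of
   the Schur complement. *)
Lemma qform_schur_compl v : qform (schur_compl M k) v =
  qform M (col_ins k (- (\sum_j M k (lift k j) * v j 0) / M k k) v).
Proof.
set b := \sum_j _; set b' := \sum_i (v i 0)^* * M (lift k i) k.
have conj_t : (- b / M k k)^* = - b' / M k k.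
  rewrite rmorphM rmorphN fmorphV /= Mkk_conj rmorph_sum /b'; congr (- _ * _).
  by apply: eq_bigr => j _; rewrite rmorphM /= (hermitian_conjE hM) mulrC.
rewrite qform_col_ins -/b -/b' conj_t !qformE.
have -> : \sum_i \sum_j (v i 0)^* * schur_compl M k i j * v j 0 =
    \sum_i \sum_j (v i 0)^* * M (lift k i) (lift k j) * v j 0 - b' * b / M k k.
  rewrite /b /b' !mulr_suml -sumrB; apply: eq_bigr => i _.
  rewrite mulr_sumr mulr_suml -sumrB; apply: eq_bigr => j _.
  by rewrite !mxE; field.
under [in RHS]eq_bigr => i _ do under eq_bigr => j _ do rewrite mxE.
by field.
Qed.

Lemma schur_compl_psd : psd_mx M -> psd_mx (schur_compl M k).
Proof. by move=> hp v; rewrite -/(qform _ _) qform_schur_compl; apply: hp. Qed.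

Lemma schur_compl_ker (u : 'rV[C]_m.+1) : u *m M = 0 ->
  (\row_j u 0 (lift k j)) *m schur_compl M k = 0.
Proof.
move=> hu.
have col_eq0 c : \sum_i u 0 (lift k i) * M (lift k i) c = - (u 0 k * M k c).
  apply/eqP; rewrite -addr_eq0 addrC.
  by have := congr1 (fun A : 'rV_m.+1 => A 0 c) hu; rewrite !mxE (bigD1_ord k) // => ->.
apply/rowP => j; rewrite !mxE.
under eq_bigr => i _ do rewrite !mxE mulrBr.
rewrite sumrB (_ : \sum_i _ * (_ / _) = (\sum_i u 0 (lift k i) * M (lift k i) k) *
  (M k (lift k j) / M k k)); last by rewrite mulr_suml; apply: eq_bigr => i _; ring.
by rewrite !col_eq0; field.
Qed.

End SchurComplement.

Section Irreducible.
Variable R : realType.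
Local Notation C := R[i].

Definition offdiag_sector0 n (s c : R) (M : 'M[C]_n) : Prop :=
  forall i j, i != j -> sector0 s c (- M i j).

Definition decoupled n (M : 'M[C]_n) (A : {set 'I_n}) : Prop :=
  forall i j, i \in A -> j \notin A -> M i j = 0 /\ M j i = 0.

Definition irreducible_set n (M : 'M[C]_n) : Prop :=
  forall A : {set 'I_n}, A != set0 -> A != setT -> ~ decoupled M A.

Lemma decoupledC n (M : 'M[C]_n) A : decoupled M A -> decoupled M (~: A).
Proof.
by move=> dA i j; rewrite !inE negbK => iA jA; have [] := dA _ _ jA iA.
Qed.

Lemma sum_mul_delta n (F : 'I_n -> C) j : \sum_i F i * (i == j)%:R = F j.
Proof.
rewrite (bigD1 j) //= eqxx mulr1 big1 ?addr0 // => i /negbTE ->.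
by rewrite mulr0.
Qed.

Lemma psd_diag_eq0_row m (M : 'M[C]_m.+1) k j : hermitian_mx M -> psd_mx M ->
  M k k = 0 -> M k (lift k j) = 0.
Proof.
move=> hM hp Mkk0; apply/eqP/negP => /negP Mkj0.
have Mjk0 : M (lift k j) k != 0 by rewrite -(hermitian_conjE hM) conjC_eq0.
pose e : 'cV[C]_m := \col_a (a == j)%:R.
set c := M k (lift k j) in Mkj0 *; set c' := M (lift k j) k in Mjk0 *.
set d := M (lift k j) (lift k j).
have d_conj : d^* = d by rewrite geC0_conj // psd_diag_ge0.
have c'_conj : c'^* = c by rewrite (hermitian_conjE hM).
(* On t e_k + e_j the form equals t^* c + c' t + d, which this t makes -1. *)
pose t := - (d + 1) / (2 * c').
have t_conj : t^* = - (d + 1) / (2 * c).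
  by rewrite rmorphM rmorphN fmorphV /= rmorphD rmorphM /= d_conj c'_conj rmorph1 rmorph_nat.
have row_e : \sum_i M k (lift k i) * e i 0 = c.
  by under eq_bigr => i _ do rewrite mxE; rewrite sum_mul_delta.
have col_e : \sum_i (e i 0)^* * M (lift k i) k = c'.
  under eq_bigr => i _ do rewrite mxE rmorph_nat mulrC.
  by rewrite sum_mul_delta.
have := hp (col_ins k t e); rewrite -/(qform _ _) qform_col_ins row_e col_e qform_delta.
rewrite mxE Mkk0 t_conj (_ : _ + _ = -1); first by rewrite lerNr oppr0 ler10.
by rewrite /t -/d mulr0 mul0r add0r; field; rewrite Mkj0 Mjk0.
Qed.

Lemma irreducible_psd_diag_gt0 m (M : 'M[C]_m.+2) k : hermitian_mx M -> psd_mx M ->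
  irreducible_set M -> 0 < M k k.
Proof.
move=> hM hp hirr; rewrite lt_def psd_diag_ge0 // andbT.
apply/negP => /eqP Mkk0; apply: (hirr [set k]).
- by apply/set0Pn; exists k; rewrite inE.
- apply/negP => /eqP kT; have : lift k ord0 \in [set k] by rewrite kT inE.
  by rewrite inE eq_sym (negbTE (neq_lift k ord0)).
move=> x y; rewrite !inE => /eqP -> yk; have ky : k != y by rewrite eq_sym.
have [j -> _] := unlift_some ky.
have Mkj0 := psd_diag_eq0_row j hM hp Mkk0.
by split=> //; rewrite -(hermitian_conjE hM) Mkj0 rmorph0.
Qed.

Variables (m : nat) (M : 'M[C]_m.+1) (k : 'I_m.+1) (s c : R).
Hypotheses (hM : hermitian_mx M) (Mkk_gt0 : 0 < M k k).
Hypotheses (s_gt0 : 0 < s) (s_le_c : s <= c) (hsec : offdiag_sector0 s c M).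

Local Notation S := (schur_compl M k).

Lemma schur_compl_oppE i j : - S i j =
  - M (lift k i) (lift k j) + (- M (lift k i) k) * (- M k (lift k j)) * (M k k)^-1.
Proof. by rewrite mxE; ring. Qed.

Let c2_ge0 : 0 <= c ^+ 2 - s ^+ 2.
Proof. by rewrite subr_ge0 ler_pXn2r // ?nnegrE ltW // (lt_le_trans s_gt0). Qed.

Let sc2_gt0 : 0 < s * c *+ 2.
Proof. by rewrite pmulrn_lgt0 // mulr_gt0 // (lt_le_trans s_gt0). Qed.

Let sector_terms i j : i != j ->
  sector0 (s * c *+ 2) (c ^+ 2 - s ^+ 2) (- M (lift k i) (lift k j)) /\
  sector0 (s * c *+ 2) (c ^+ 2 - s ^+ 2)
    ((- M (lift k i) k) * (- M k (lift k j)) * (M k k)^-1).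
Proof.
move=> ij; split.
  by apply: sector0_double => //; apply: hsec; rewrite (inj_eq (@lift_inj _ k)).
apply: sector0Mr; first by rewrite invr_gt0.
by apply: sector0M => //; apply: hsec; rewrite ?neq_lift // eq_sym neq_lift.
Qed.

Lemma schur_compl_offdiag_sector0 : offdiag_sector0 (s * c *+ 2) (c ^+ 2 - s ^+ 2) S.
Proof.
move=> i j ij; have [h1 h2] := sector_terms ij.
by rewrite schur_compl_oppE; apply: sector0D.
Qed.

(* No cancellation can occur in a sum of two elements of a sector. *)
Lemma schur_compl_eq0 i j : i != j -> S i j = 0 ->
  M (lift k i) (lift k j) = 0 /\ M (lift k i) k * M k (lift k j) = 0.
Proof.
move=> ij Sij0; have [h1 h2] := sector_terms ij.
have /esym := schur_compl_oppE i j; rewrite Sij0 oppr0 => e.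
have [/eqP a0 /eqP b0] := sector0_addr_eq0 sc2_gt0 c2_ge0 h1 h2 e.
split; first by apply/eqP; rewrite -oppr_eq0.
by apply/eqP; move: b0; rewrite mulrNN mulf_eq0 invr_eq0 (gt_eqF Mkk_gt0) orbF.
Qed.

Lemma decoupled_lift (B : {set 'I_m}) : decoupled S B ->
  (forall j, j \in B -> M k (lift k j) = 0) -> decoupled M [set lift k j | j in B].
Proof.
move=> dB col0 x y /imsetP[i iB ->] {x} yA.
case: (unliftP k y) yA => [j ->|->] yA; last first.
  by rewrite -(hermitian_conjE hM) col0 // rmorph0.
have jB : j \notin B by apply: contra yA => jB; apply: imset_f.
have ij : i != j by apply: contraNneq jB => <-.
have [Sij0 Sji0] := dB _ _ iB jB.
by rewrite (schur_compl_eq0 ij Sij0).1 (schur_compl_eq0 _ Sji0).1 // eq_sym.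
Qed.

Lemma schur_compl_irreducible : irreducible_set M -> irreducible_set S.
Proof.
move=> hirr B B0 BT dB.
have [B' [B'0 dB' col0]] : exists B' : {set 'I_m}, [/\ B' != set0, decoupled S B' &
    forall j, j \in B' -> M k (lift k j) = 0].
  case: (boolP [exists i in B, M (lift k i) k != 0]).
    case/exists_inP => i iB Mik0; exists (~: B); split.
    - by apply: contraNneq BT => /(congr1 (@setC _)); rewrite setCK setC0 => ->.
    - exact: decoupledC.
    move=> j; rewrite inE => jB; have ij : i != j by apply: contraNneq jB => <-.
    have [_ /eqP] := schur_compl_eq0 ij (dB _ _ iB jB).1.
    by rewrite mulf_eq0 (negbTE Mik0) => /eqP.
  move/exists_inPn => col0; exists B; split=> // j /col0 /negPn /eqP Mjk0.
  by rewrite -(hermitian_conjE hM) Mjk0 rmorph0.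
apply: (hirr _ _ _ (decoupled_lift dB' col0)); first by rewrite imset_eq0.
apply/negP => /eqP AT; have : k \in [set lift k j | j in B'] by rewrite AT inE.
by case/imsetP => j _ /eqP; rewrite (negbTE (neq_lift k j)).
Qed.

End Irreducible.

Lemma ker_row_nowhere_zero (R : realType) m (M : 'M[R[i]]_m.+1) :
  hermitian_mx M -> psd_mx M -> irreducible_set M ->
  offdiag_sector0 (sin (pi / 2 ^+ m.+1)) (cos (pi / 2 ^+ m.+1)) M ->
  forall u : 'rV_m.+1, u *m M = 0 -> u != 0 -> forall a, u 0 a != 0.
Proof.
elim: m M => [|m IH] M hM hp hirr hsec u hu u0 a.
  apply: contra u0 => /eqP ua; apply/eqP/rowP => b.
  by rewrite (ord1 a) in ua; rewrite (ord1 b) ua mxE.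
have [k uk] : exists k, u 0 k != 0.
  apply/existsP; apply: contraR u0 => /existsPn u_eq0; apply/eqP/rowP => b.
  by rewrite mxE; apply/eqP/negPn.
have Mkk_gt0 := irreducible_psd_diag_gt0 k hM hp hirr.
set u' := \row_j u 0 (lift k j).
have u'0 : u' != 0.
  apply: contraNneq uk => u'_eq0; move/rowP/(_ k): hu.
  rewrite !mxE (bigD1_ord k) //= big1 ?addr0 => [/eqP|i _]; last first.
    by move/rowP/(_ i): u'_eq0; rewrite !mxE => ->; rewrite mul0r.
  by rewrite mulf_eq0 (gt_eqF Mkk_gt0) orbF.
have hsec' : offdiag_sector0 (sin (pi / 2 ^+ m.+1)) (cos (pi / 2 ^+ m.+1))
    (schur_compl M k).
  rewrite (sin_theta_double _ m.+1) (cos_theta_double _ m.+1).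
  exact: schur_compl_offdiag_sector0 Mkk_gt0 (sin_theta_gt0 _ _) (sin_theta_le_cos _ _) hsec.
have IH' := IH _ (schur_compl_hermitian hM Mkk_gt0) (schur_compl_psd hM Mkk_gt0 hp)
  (schur_compl_irreducible hM Mkk_gt0 (sin_theta_gt0 _ _) (sin_theta_le_cos _ _) hsec hirr)
  hsec' _ (schur_compl_ker Mkk_gt0 hu) u'0.
by case: (unliftP k a) => [j ->|->] //; move: (IH' j); rewrite mxE.
Qed.

Lemma rank_ge_of_ker_nowhere_zero (F : fieldType) n (M : 'M[F]_n.+1) :
  (forall u : 'rV_n.+1, u *m M = 0 -> u != 0 -> u 0 0 != 0) -> (n <= \rank M)%N.
Proof.
move=> hker; set K := kermx M.
have K_ker i : row i K *m M = 0 by rewrite -row_mul mulmx_ker row0.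
suff : (\rank K <= 1)%N by rewrite /K mxrank_ker leq_subLR addn1 ltnS.
have [/existsP[r Kr0] | /existsPn K0] := boolP [exists r, row r K != 0]; last first.
  suff -> : K = 0 by rewrite mxrank0.
  by apply/row_matrixP => i; rewrite row0; apply/eqP/negPn.
set w := row r K; have w_ker : w *m M = 0 := K_ker r.
have w0 := hker _ w_ker Kr0; clearbody w.
apply: leq_trans (rank_leq_row w); apply: mxrankS; apply/row_subP => i.
move: (row i K) (K_ker i) => v v_ker.
set d := v - (v 0 0 / w 0 0) *: w.
have d_ker : d *m M = 0 by rewrite mulmxBl -scalemxAl v_ker w_ker scaler0 subr0.
have d00 : d 0 0 = 0 by rewrite !mxE divfK // subrr.
have -> : v = (v 0 0 / w 0 0) *: w.
  by apply/eqP; rewrite -subr_eq0; apply/negPn/negP => /(hker _ d_ker); rewrite d00 eqxx.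
by rewrite scalemx_sub.
Qed.

(* The witness lists A first and its complement after. *)
Lemma exists_perm_prefix n (A : {set 'I_n}) :
  exists s : 'S_n, forall i, (s i \in A) = (i < #|A|)%N.
Proof.
set sq := enum A ++ enum (~: A).
have sq_size : size sq = n by rewrite size_cat -!cardE cardsC card_ord.
have sq_uniq : uniq sq.
  by rewrite cat_uniq !enum_uniq andbT; apply/hasPn => x; rewrite !mem_enum inE.
pose f (i : 'I_n) : 'I_n := nth i sq i.
have f_inj : injective f.
  move=> i j; rewrite /f [nth j sq j](set_nth_default i) ?sq_size //.
  by move/eqP; rewrite nth_uniq ?sq_size // => /eqP /val_inj.
exists (perm f_inj) => i; rewrite permE /f nth_cat -cardE.
case: ifP => hi; first by rewrite -mem_enum mem_nth // -cardE.
apply/negbTE; have : (i - #|A| < size (enum (~: A)))%N.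
  by rewrite -cardE ltn_subLR ?cardsC ?card_ord // leqNgt hi.
by move=> /(mem_nth i); rewrite mem_enum inE.
Qed.

Lemma irreducible_set_of_mx (R : realType) n (M : 'M[R[i]]_n) :
  irreducible_mx M -> irreducible_set M.
Proof.
move=> hirr A A0 AT dA; apply: hirr.
have [s hs] := exists_perm_prefix A.
exists s, #|A|; split; first by rewrite card_gt0.
split; last by move=> i j hi hj; apply: dA; rewrite hs // (negbTE hj).
by rewrite -[X in (_ < X)%N]card_ord -cardsT proper_card // properT.
Qed.

Unset Implicit Arguments. Set Strict Implicit.

Theorem lemma5 (R : realType) (n : nat) (M : 'M[R[i]]_n) :
  hermitian_mx M -> psd_mx M -> irreducible_mx M ->
  (forall i j : 'I_n, i != j -> M i j != 0 ->
     arg_in (- M i j) (- (pi / 2 ^+ n)) (pi / 2 ^+ n)) ->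
  (n - 1 <= \rank M)%N.
Proof.
case: n M => [|m] M // hM hp hirr harg; rewrite subn1.
have hsec : offdiag_sector0 (sin (pi / 2 ^+ m.+1)) (cos (pi / 2 ^+ m.+1)) M.
  move=> i j ij; have [->|Mij0] := eqVneq (M i j) 0; first by left; rewrite oppr0.
  right; apply: sector_of_arg; last by rewrite oppr_eq0.
    by rewrite theta_gt0 theta_le_pihalf.
  exact: harg.
apply: rank_ge_of_ker_nowhere_zero => u hu u0.
exact: ker_row_nowhere_zero hM hp (irreducible_set_of_mx hirr) hsec u hu u0 0.
Qed.
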